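(* Let $\underline{X}$ be an observation from a distribution $P_{(\theta,\underline{\eta})}$ indexed by $(\theta,\underline{\eta})$ in a parameter space $H$, where $\theta$ is a real parameter of interest and $\underline{\eta}$ a nuisance parameter vector. Let $C_0(\underline{X})=[L_0(\underline{X}),U_0(\underline{X})]$ be any confidence interval for $\theta$ (of any level), with $L_0\le U_0$ statistics. Fix $\theta_0$ and consider $H_0:\theta=\theta_0$ versus $H_A:\theta\ne\theta_0$. Define the test statistic $$T_2(\underline{x},\theta_0)=\min\{\theta_0-L_0(\underline{x}),\,U_0(\underline{x})-\theta_0\}$$ and $$h_2(\underline{x},\theta_0)=\sup_{(\theta,\underline{\eta})\in H,\ \theta=\theta_0} P_{(\theta,\underline{\eta})}\big(T_2(\underline{X},\theta_0)\le T_2(\underline{x},\theta_0)\big).$$ Then: (i) $h_2(\underline{X},\theta_0)$ is a valid p-value for $H_0$, i.e. for every $a\in[0,1]$, $\sup_{(\theta,\underline{\eta})\in H,\ \theta=\theta_0}P_{(\theta,\underline{\eta})}(h_2(\underline{X},\theta_0)\le a)\le a$. (ii) For $\alpha\in[0,1]$, the interval $C_0^M(\underline{x})=\overline{\{\theta_0: h_2(\underline{x},\theta_0)>\alpha\}}$ has infimum coverage probability at least $1-\alpha$, i.e. $\inf_{(\theta,\underline{\eta})\in H}P_{(\theta,\underline{\eta})}(\theta\in C_0^M(\underline{X}))\ge1-\alpha$.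
   Context: For a set $A$ of parameter values in $\mathbb{R}$, $\overline{A}$ denotes the smallest closed simply connected set (closed interval) containing $A$. The infimum coverage probability (ICP) of an interval $C(\underline{X})$ for $\theta$ is $\inf_{(\theta,\underline{\eta})\in H}P_{(\theta,\underline{\eta})}(\theta\in C(\underline{X}))$; an interval is a ''$1-\alpha$ exact'' interval if its ICP is at least $1-\alpha$. *)

From HB Require Import structures.
From mathcomp Require Import all_boot all_order all_algebra.
From mathcomp Require Import all_classical all_reals all_analysis.
Set Implicit Arguments. Unset Strict Implicit. Unset Printing Implicit Defensive.
Import Order.TTheory GRing.Theory Num.Theory numFieldNormedType.Exports.
Local Open Scope classical_set_scope.
Local Open Scope ring_scope.

Definition T2 {Omega : Type} {R : realType} (L0 U0 : Omega -> R)
  (x : Omega) (th0 : R) : R := Num.min (th0 - L0 x) (U0 x - th0).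

Definition h2 {d} {Omega : measurableType d} {R : realType} {Eta : Type}
  (H : set (R * Eta)) (P : R -> Eta -> probability Omega R)
  (L0 U0 : Omega -> R) (x : Omega) (th0 : R) : \bar R :=
  ereal_sup [set P th0 eta [set y | T2 L0 U0 y th0 <= T2 L0 U0 x th0]
            | eta in [set eta | H (th0, eta)]].

(* smallest closed simply connected subset of R (closed interval, possibly
   unbounded or empty) containing A *)
Definition closed_interval_hull {R : realType} (A : set R) : set R :=
  [set x : R | forall C : set R, closed C ->
     (forall y z w, C y -> C z -> y <= w <= z -> C w) ->
     A `<=` C -> C x].

(* inner probability: sup of P S over measurable S contained in A
   (equals P A whenever A is measurable) *)
Definition inner_prob {d} {Omega : measurableType d} {R : realType}
  (mu : probability Omega R) (A : set Omega) : \bar R :=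
  ereal_sup [set mu S | S in [set S | measurable S /\ S `<=` A]].

(* h2(x, th0) is the worst case, over the nuisance parameter, of the
   distribution function of the statistic T2 evaluated at the observed value
   T2(x).  Since it is nondecreasing in that value, {h2 <= a} is the preimage
   under T2 of a down-closed set of reals each of whose sublevel events has
   probability at most a; writing it as an increasing union of sublevel events,
   continuity from below bounds its probability by a.  Inverting the test gives
   (ii): theta lies in C_0^M(X) as soon as h2(X, theta) > alpha, an event of
   probability at least 1 - alpha. *)
From HB Require Import structures.
From mathcomp Require Import all_boot all_order all_algebra.
From mathcomp Require Import all_classical all_reals all_analysis.
From mathcomp Require Import measurable_realfun lra.
Import Order.TTheory GRing.Theory Num.Theory numFieldNormedType.Exports.
Local Open Scope classical_set_scope.
Local Open Scope ring_scope.

Section down_closed.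
Context {R : realType}.

Definition down_closed (S : set R) := forall s t, S t -> s <= t -> S s.

Lemma down_closed_is_interval (S : set R) : down_closed S -> is_interval S.
Proof. by move=> dS x y _ Sy z /andP[_ zy]; exact: dS Sy zy. Qed.

Lemma down_closed_cofinal_seq {S : set R} : down_closed S -> S !=set0 ->
  exists u : R ^nat,
    [/\ nondecreasing_seq u, forall n, S (u n) & forall t, S t -> exists n, t <= u n].
Proof.
move=> dS [s0 Ss0].
have [ubS|nubS] := pselect (has_ubound S); last first.
  have Snat n : S n%:R.
    apply: contra_notP nubS => nSn; exists n%:R => t St.
    by apply: contra_notP nSn => /negP; rewrite -ltNge => /ltW; exact: dS St.
  exists (fun n => n%:R); split => // [m n mn|t _]; first by rewrite ler_nat.
  by exists (Num.truncn t).+1; exact/ltW/truncnS_gt.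
have supS : has_sup S by split => //; exists s0.
have le_sup t : S t -> t <= sup S by exact: ub_le_sup.
have [Ssup|nSsup] := pselect (S (sup S)).
  by exists (fun=> sup S); split => // t St; exists 0%N; exact: le_sup.
pose u n : R := sup S - n.+1%:R^-1.
have inv_gt0 n : 0 < n.+1%:R^-1 :> R by rewrite invr_gt0.
exists u; split.
- move=> m n mn; rewrite /u lerD2l lerN2 lef_pV2 ?posrE ?ltr0n //.
  by rewrite ler_nat.
- move=> n; have [e Se lt_e] := sup_adherent (inv_gt0 n) supS.
  exact/(dS _ _ Se)/ltW.
- move=> t St; have lt_t : t < sup S.
    by rewrite lt_neqAle le_sup // andbT; apply: contra_notN nSsup => /eqP <-.
  have gap_gt0 : 0 < sup S - t by rewrite subr_gt0.
  exists (Num.truncn (sup S - t)^-1).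
  rewrite /u; set k := _%:R^-1.
  have : k < sup S - t.
    by rewrite -[ltRHS]invrK ltf_pV2 ?posrE ?invr_gt0 ?ltr0n // truncnS_gt.
  lra.
Qed.

End down_closed.

Section preimage_down_closed.
Context {d} {Omega : measurableType d} {R : realType}.
Local Open Scope ereal_scope.

Lemma measure_bigcup_nondecreasing_le (mu : {measure set Omega -> \bar R})
    (F : (set Omega) ^nat) (a : \bar R) :
  (forall n, measurable (F n)) -> nondecreasing_seq F ->
  (forall n, mu (F n) <= a) -> mu (\bigcup_n F n) <= a.
Proof.
move=> mF ndF leFa.
have cvF := @nondecreasing_cvg_mu _ _ _ mu _ mF (bigcupT_measurable _ mF) ndF.
rewrite -(cvg_lim _ cvF) //; apply: lime_le.
  by apply/cvg_ex; eexists; exact: cvF.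
by near=> n; exact: leFa.
Unshelve. all: by end_near.
Qed.

Context {f : Omega -> R} (mf : measurable_fun setT f).

Lemma measurable_preimage_down_closed (S : set R) :
  down_closed S -> measurable (f @^-1` S).
Proof.
move=> /down_closed_is_interval/is_interval_measurable mS.
by have := mf measurableT _ mS; rewrite setTI.
Qed.

Lemma measurable_sublevel (t : R) : measurable [set x | f x <= t]%R.
Proof.
apply: (measurable_preimage_down_closed [set s | s <= t]%R).
by move=> r s /= st rs; exact: le_trans rs st.
Qed.

Lemma measure_preimage_down_closed_le (mu : {measure set Omega -> \bar R})
    (S : set R) (a : \bar R) : 0 <= a -> down_closed S ->
  (forall t, S t -> mu [set x | f x <= t]%R <= a) -> mu (f @^-1` S) <= a.
Proof.
move=> a_ge0 dS leSa; have [->|/set0P S0] := eqVneq S set0.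
  by rewrite preimage_set0 measure0.
have [u [ndu Su cofu]] := down_closed_cofinal_seq dS S0.
have -> : f @^-1` S = \bigcup_n [set x | f x <= u n]%R.
  apply/seteqP; split => [x /cofu [n] fxu|x [n _ /= fxu]]; first by exists n.
  exact: dS (Su n) fxu.
apply: measure_bigcup_nondecreasing_le => // [n|m n mn|n]; last exact: leSa.
  exact: measurable_sublevel.
by apply/subsetPset => x /= fxm; exact: le_trans fxm (ndu _ _ mn).
Qed.

End preimage_down_closed.

Section sup_cdf.
Context {d} {Omega : measurableType d} {R : realType} {I : Type}.
Variables (E : set I) (Q : I -> probability Omega R).
Variables (f : Omega -> R) (mf : measurable_fun setT f).
Local Open Scope ereal_scope.

Definition sup_cdf (t : R) : \bar R :=
  ereal_sup [set Q i [set x | f x <= t]%R | i in E].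

Lemma sup_cdf_nondecreasing : {homo sup_cdf : s t / (s <= t)%R >-> s <= t}.
Proof.
move=> s t st; apply: ge_ereal_sup => _ [i Ei <-].
apply: (@le_trans _ _ (Q i [set x | f x <= t]%R)).
  apply: le_measure; rewrite ?inE; try exact: measurable_sublevel.
  by move=> x /= fxs; exact: le_trans fxs st.
by apply: ereal_sup_ubound; exists i.
Qed.

Lemma sup_cdf_pvalue_valid {a : R} {i : I} : (0 <= a)%R -> E i ->
  measurable [set x | sup_cdf (f x) <= a%:E] /\
  Q i [set x | sup_cdf (f x) <= a%:E] <= a%:E.
Proof.
move=> a_ge0 Ei.
have dS : down_closed [set t | sup_cdf t <= a%:E].
  by move=> s t /= supt st; exact: le_trans (sup_cdf_nondecreasing _ _ st) supt.
split; first exact: measurable_preimage_down_closed mf _ dS.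
apply: (measure_preimage_down_closed_le mf _ _ _ _ dS); rewrite ?lee_fin // => t /=.
by apply: le_trans; apply: ereal_sup_ubound; exists i.
Qed.

End sup_cdf.

Lemma measurable_T2 {d} {Omega : measurableType d} {R : realType}
    {L0 U0 : Omega -> R} (th0 : R) :
  measurable_fun setT L0 -> measurable_fun setT U0 ->
  measurable_fun setT (fun x => T2 L0 U0 x th0).
Proof.
by move=> mL0 mU0; apply: measurable_minr; apply: measurable_funB.
Qed.

Lemma sub_closed_interval_hull {R : realType} (A : set R) :
  A `<=` closed_interval_hull A.
Proof. by move=> x Ax C _ _; apply. Qed.

Theorem theorem1 (d : measure_display) (Omega : measurableType d)
  (R : realType) (Eta : Type) (H : set (R * Eta))
  (P : R -> Eta -> probability Omega R) (L0 U0 : Omega -> R)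
  (mL0 : measurable_fun setT L0) (mU0 : measurable_fun setT U0)
  (hLU : forall x, L0 x <= U0 x) :
  (forall (th0 a : R), 0 <= a <= 1 ->
     (ereal_sup [set P th0 eta [set x | h2 H P L0 U0 x th0 <= a%:E]
                 | eta in [set eta | H (th0, eta)]] <= a%:E)%E)
  /\
  (forall alpha : R, 0 <= alpha <= 1 ->
     ((1 - alpha)%:E <=
      ereal_inf [set inner_prob (P th_eta.1 th_eta.2)
                   [set x | closed_interval_hull
                              [set th0 | (alpha%:E < h2 H P L0 U0 x th0)%E]
                              th_eta.1]
                 | th_eta in H])%E).
Proof.
have h2_valid th0 a eta : 0 <= a -> H (th0, eta) ->
    measurable [set x | (h2 H P L0 U0 x th0 <= a%:E)%E] /\
    (P th0 eta [set x | h2 H P L0 U0 x th0 <= a%:E] <= a%:E)%E.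
  exact: (sup_cdf_pvalue_valid [set eta | H (th0, eta)] (P th0) _
    (measurable_T2 th0 mL0 mU0)).
split=> [th0 a /andP[a_ge0 _]|alpha /andP[alpha_ge0 _]].
  by apply: ge_ereal_sup => _ [eta Heta <-]; have [] := h2_valid th0 a eta a_ge0 Heta.
apply: le_ereal_inf_tmp => _ [[th eta] Hth <-] /=.
have [mB PB] := h2_valid th alpha eta alpha_ge0 Hth.
set B := [set x | _] in mB PB.
apply: (@le_trans _ _ (P th eta (~` B))).
  by rewrite probability_setC // EFinB; exact: leeB.
apply: ereal_sup_ubound; exists (~` B) => //; split; first exact: measurableC.
move=> x /negP; rewrite -ltNge => h2_gt; exact: sub_closed_interval_hull.
Qed.
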